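(* Let $X$ be an infinite Tychonoff space and let $E$ be a Banach space. If $T:C_p(X)\to E_w$ is a sequentially continuous map (not necessarily linear), then the set $X\setminus B(T)$ is finite, where $B(T)$ is the set of all points $t\in X$ having an open neighbourhood $U$ in $X$ such that $\sup\{\|T(f)\|: f\in C(X),\ \operatorname{supp}(f)\subset U\}<\infty$.
   Context: $C_p(X)$ is the space $C(X)$ of continuous real-valued functions on $X$ with the pointwise convergence topology; $E_w$ is $E$ with its weak topology; $\|\cdot\|$ is the norm of $E$. For $f:X\to\mathbb{R}$, $\operatorname{supp}(f)=\{t\in X: f(t)\neq 0\}$. A map is sequentially continuous if it sends convergent sequences to convergent sequences. *)

From HB Require Import structures.
From mathcomp Require Import all_boot all_order all_algebra.
From mathcomp Require Import all_classical all_reals all_analysis.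
Set Implicit Arguments. Unset Strict Implicit. Unset Printing Implicit Defensive.
Import Order.TTheory GRing.Theory Num.Theory.
Import numFieldNormedType.Exports.
Local Open Scope classical_set_scope.
Local Open Scope ring_scope.

Definition tychonoff_space (X : topologicalType) (R : realType) : Prop :=
  accessible_space X /\
  forall (a : X) (B : set X), closed B -> ~ B a ->
    exists f : X -> R, continuous f /\ f a = 0 /\ (forall b, B b -> f b = 1).

Definition supp (X : Type) (R : realType) (f : X -> R) : set X :=
  [set t | f t != 0].

(* Convergence of a sequence in C_p(X): pointwise convergence. *)
Definition cp_cvg (X : topologicalType) (R : realType)
    (fn : nat -> X -> R) (f : X -> R) : Prop :=
  forall x : X, fn n x @[n --> \oo] --> f x.

(* Convergence of a sequence in E_w (weak topology sigma(E, dual of E)):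
   convergence after applying every continuous linear functional. *)
Definition weak_cvg (R : realType) (E : normedModType R)
    (un : nat -> E) (u : E) : Prop :=
  forall phi : {linear E -> R^o}, continuous phi ->
    phi (un n) @[n --> \oo] --> phi u.

(* T : C_p(X) -> E_w sequentially continuous. T is given on all of X -> R
   but only its values on continuous functions matter. *)
Definition seq_cont_Cp_Ew (X : topologicalType) (R : realType)
    (E : normedModType R) (T : (X -> R) -> E) : Prop :=
  forall (fn : nat -> X -> R) (f : X -> R),
    (forall n, continuous (fn n)) -> continuous f ->
    cp_cvg fn f -> weak_cvg (fun n => T (fn n)) (T f).

Definition BT (X : topologicalType) (R : realType)
    (E : normedModType R) (T : (X -> R) -> E) : set X :=
  [set t | exists U : set X, [/\ open U, U t &
     exists M : R, forall f : X -> R, continuous f -> supp f `<=` U ->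
       `|T f| <= M]].

From HB Require Import structures.
From mathcomp Require Import all_boot all_order all_algebra.
From mathcomp Require Import all_classical all_reals all_analysis.
From mathcomp Require Import lra.
Import Order.TTheory GRing.Theory Num.Theory.
Import numFieldNormedType.Exports.
Local Open Scope classical_set_scope.
Local Open Scope ring_scope.

(* If infinitely many points lie outside B(T), Tychonoff separation picks a
   sequence t_n of them with pairwise disjoint open neighbourhoods U_n.  Each
   set A_n = {T g - T 0 : supp g in U_n} is unbounded, whereas a sequence taken
   from infinitely many distinct A_n comes from functions with disjoint
   supports, which tend to 0 in C_p(X); so it tends to 0 weakly.  A gliding
   hump contradicts this: choose v_k in some A_(n_k) with ||v_k|| >= 3 4^k and
   |sum_(j<k) 4^-j psi_j(v_k)| <= 1, psi_j being a Hahn-Banach functional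
   norming v_j; then phi = sum_j 4^-j psi_j is a continuous functional with
   phi(v_k) >= 1 for every k. *)

Lemma dependent_choice_inv {T : Type} (P : T -> Prop)
    (next : nat -> T -> T -> Prop) (x0 : T) :
  P x0 -> (forall k x, P x -> exists2 y, P y & next k x y) ->
  exists f : nat -> T, f 0%N = x0 /\ forall k, P (f k) /\ next k (f k) (f k.+1).
Proof.
move=> Px0 step.
have step' (p : nat * T) :
    {q : nat * T | q.1 = p.1.+1 /\ (P p.2 -> P q.2 /\ next p.1 p.2 q.2)}.
  apply: cid; have [Pp|nPp] := pselect (P p.2).
  - by have [y Py pq] := step p.1 p.2 Pp; exists (p.1.+1, y); split.
  - by exists (p.1.+1, p.2); split => // /nPp.
have [g [g0 gS]] := dependent_choice step' (0%N, x0).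
have g_stage k : (g k).1 = k.
  by elim: k => [|k IH]; rewrite ?g0 // (gS k).1 IH.
have gP k : P (g k).2.
  by elim: k => [|k IH]; [rewrite g0 | have [_ /(_ IH) []] := gS k].
exists (fun k => (g k).2); split; first by rewrite g0.
by move=> k; split => //; have [_ /(_ (gP k)) [_]] := gS k; rewrite g_stage.
Qed.

Section norming_functional.
Context {R : realType} {E : normedModType R}.

Definition dominated_graph (G : set (E * R)) : Prop :=
  [/\ forall x a y b, G (x, a) -> G (y, b) -> G (x + y, a + b),
      forall t x a, G (x, a) -> G (t *: x, t * a),
      forall a, G (0, a) -> a = 0 &
      forall x a, G (x, a) -> a <= `|x|].

Lemma dominated_graph_fun G x a b :
  dominated_graph G -> G (x, a) -> G (x, b) -> a = b.
Proof.
case=> Gadd Gscale Gfun _ Gxa Gxb; apply/eqP; rewrite -subr_eq0; apply/eqP.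
have := Gadd _ _ _ _ Gxa (Gscale (-1) _ _ Gxb).
by rewrite scaleN1r mulN1r subrr => /Gfun.
Qed.

Lemma dominated_graph_line z :
  dominated_graph (range (fun t => (t *: z, t * `|z|))).
Proof.
split.
- move=> x a y b [s _ [<- <-]] [t _ [<- <-]].
  by exists (s + t); rewrite // scalerDl mulrDl.
- by move=> t x a [s _ [<- <-]]; exists (t * s); rewrite // scalerA mulrA.
- move=> a [s _ [/eqP]]; rewrite scaler_eq0 => /orP[/eqP-> <-|/eqP-> <-].
    by rewrite mul0r.
  by rewrite normr0 mulr0.
- by move=> x a [s _ [<- <-]]; rewrite normrZ ler_wpM2r // ler_norm.
Qed.

Lemma dominated_graph_chain (I : Type) (D : set I) (G : I -> set (E * R)) :
  (forall i, D i -> dominated_graph (G i)) ->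
  (forall i j, D i -> D j -> G i `<=` G j \/ G j `<=` G i) ->
  dominated_graph (\bigcup_(i in D) G i).
Proof.
move=> Gdom Gtot.
have common p q : (\bigcup_(i in D) G i) p -> (\bigcup_(i in D) G i) q ->
    exists2 i, D i & G i p /\ G i q.
  move=> [i Di Gip] [j Dj Gjq].
  have [ij|ji] := Gtot _ _ Di Dj.
  - by exists j => //; split => //; apply: ij.
  - by exists i => //; split => //; apply: ji.
split.
- move=> x a y b Uxa Uyb; have [i Di [Gxa Gyb]] := common _ _ Uxa Uyb.
  by exists i => //; have [Gadd _ _ _] := Gdom _ Di; apply: Gadd.
- move=> t x a [i Di Gxa]; exists i => //.
  by have [_ Gscale _ _] := Gdom _ Di; apply: Gscale.
- by move=> a [i Di G0a]; have [_ _ Gfun _] := Gdom _ Di; apply: Gfun.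
- by move=> x a [i Di Gxa]; have [_ _ _ Gle] := Gdom _ Di; apply: Gle.
Qed.

Lemma dominated_graph_gap G x : dominated_graph G -> G (0, 0) ->
  exists c, (forall v b, G (v, b) -> b - `|v - x| <= c) /\
            (forall w g, G (w, g) -> c <= `|w + x| - g).
Proof.
case=> Gadd _ _ Gdom G00.
pose S := [set p.2 - `|p.1 - x| | p in G].
have S_ub w g : G (w, g) -> ubound S (`|w + x| - g).
  move=> Gwg _ [[v b] Gvb <-] /=.
  have := Gdom _ _ (Gadd _ _ _ _ Gvb Gwg).
  have := ler_normD (v - x) (w + x); rewrite addrACA addNr addr0; lra.
have S_sup : has_sup S.
  split; first by exists (0 - `|0 - x|), (0, 0).
  by exists (`|0 + x| - 0); apply: S_ub.
exists (sup S); split.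
- by move=> v b Gvb; apply: sup_upper_bound => //; exists (v, b).
- by move=> w g Gwg; apply: ge_sup; [case: S_sup | apply: S_ub].
Qed.

Let mulr_normZV (r : R) (u w : E) :
  0 < r -> r * `|r^-1 *: u + w| = `|u + r *: w|.
Proof.
move=> r0; rewrite -[r in r * _]gtr0_norm // -normrZ.
by rewrite scalerDr scalerA divff ?gt_eqF // scale1r.
Qed.

Lemma dominated_graph_extend G x : dominated_graph G -> G (0, 0) ->
  ~ (exists a, G (x, a)) ->
  exists2 G', dominated_graph G' & G `<=` G' /\ exists a, G' (x, a).
Proof.
move=> dG G00 xG; have [c [c_ge c_le]] := dominated_graph_gap G x dG G00.
have [Gadd Gscale Gfun Gdom] := dG.
exists [set p | exists t, G (p.1 - t *: x, p.2 - t * c)]; last first.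
  split; first by move=> [u b] Gub; exists 0; rewrite /= scale0r mul0r !subr0.
  by exists c, 1; rewrite /= scale1r mul1r !subrr.
split.
- move=> y a y' a' [t Gt] [s Gs]; exists (t + s) => /=.
  have := Gadd _ _ _ _ Gt Gs.
  by rewrite addrACA -opprD -scalerDl [X in (_, X)]addrACA -opprD -mulrDl.
- move=> r y a [t Gt]; exists (r * t).
  by have := Gscale r _ _ Gt; rewrite /= scalerBr mulrBr scalerA mulrA.
- move=> a [t /= Gt]; have [t0|t0] := eqVneq t 0.
    by move: Gt; rewrite t0 scale0r mul0r !subr0 => /Gfun.
  case: xG; exists ((- t)^-1 * (a - t * c)).
  have := Gscale (- t)^-1 _ _ Gt.
  by rewrite sub0r -scaleNr scalerA mulVf ?oppr_eq0 // scale1r.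
- move=> y a [t /= Gt].
  have -> : y = (y - t *: x) + t *: x by rewrite subrK.
  have -> : a = (a - t * c) + t * c by rewrite subrK.
  move: (y - t *: x) (a - t * c) Gt => u b Gub.
  have [tneg|tpos|->] := ltgtP t 0.
  + have tneg' : 0 < - t by rewrite oppr_gt0.
    have := ler_wpM2l (ltW tneg') (c_ge _ _ (Gscale (- t)^-1 _ _ Gub)).
    rewrite mulrBr mulrA mulfV ?gt_eqF // mul1r mulr_normZV //.
    rewrite scaleNr scalerN opprK; lra.
  + have := ler_wpM2l (ltW tpos) (c_le _ _ (Gscale t^-1 _ _ Gub)).
    rewrite mulrBr mulr_normZV // mulrA mulfV ?gt_eqF // mul1r; lra.
  + by rewrite scale0r mul0r !addr0; apply: Gdom.
Qed.

Theorem hahn_banach_norming (z : E) : exists psi : E -> R^o,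
  [/\ linear psi, forall x, `|psi x| <= `|x| & psi z = `|z|].
Proof.
pose L := range (fun t => (t *: z, t * `|z|)).
(* Maximizing [A] with [L `|` A] dominated makes the empty chain harmless. *)
have [A [LA_dom Amax]] : exists A, dominated_graph (L `|` A) /\
    forall B, A `<` B -> ~ dominated_graph (L `|` B).
  apply: Zorn_bigcup => F Fdom Ftot.
  have [->|F0] := eqVneq F set0.
    by rewrite bigcup_set0 setU0; apply: dominated_graph_line.
  rewrite -bigcupUr; last exact/set0P.
  apply: dominated_graph_chain => // i j Fi Fj.
  by have [ij|ji] := Ftot _ _ Fi Fj; [left|right]; apply: setUS.
pose H := L `|` A.
have H00 : H (0, 0) by left; exists 0; rewrite // scale0r mul0r.
have H_total x : exists a, H (x, a).
  apply: contrapT => xH.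
  have [G' G'_dom [HG' [a G'xa]]] := dominated_graph_extend _ _ LA_dom H00 xH.
  apply: (Amax G'); last by rewrite setUidr // => p Lp; apply: HG'; left.
  split=> [p Ap|G'A]; first by apply: HG'; right.
  by apply: xH; exists a; right; apply: G'A.
have [psi psiP] := choice H_total.
have [Hadd Hscale _ Hle] := LA_dom.
exists psi; split.
- move=> a x y /=; apply: (dominated_graph_fun _ _ _ _ LA_dom (psiP _)).
  exact: Hadd (Hscale _ _ _ (psiP x)) (psiP y).
- move=> x; rewrite ler_norml (Hle _ _ (psiP x)) andbT lerNl -normrN.
  by apply: Hle; have := Hscale (-1) _ _ (psiP x); rewrite scaleN1r mulN1r.
- apply: (dominated_graph_fun _ _ _ _ LA_dom (psiP z)).
  by left; exists 1; rewrite // scale1r mul1r.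
Qed.

End norming_functional.

Section functionals.
Context {R : realType} {E : normedModType R}.

Lemma continuous_linear_of_bounded (f : E -> R^o) (C : R) :
  linear f -> (forall x, `|f x| <= C * `|x|) ->
  exists2 phi : {linear E -> R^o}, phi =1 f & continuous phi.
Proof.
move=> f_lin f_le.
pose phi : {linear E -> R^o} :=
  HB.pack f (GRing.isLinear.Build _ _ _ _ _ f_lin).
exists phi => //; apply/bounded_linear_continuous/linear_boundedP.
near=> r => x; apply: (le_trans (f_le x)); apply: ler_wpM2r; first by [].
by near: r; apply: nbhs_pinfty_ge; rewrite num_real.
Unshelve. all: by end_near. Qed.

Lemma weak_subr_cvg0 (u : nat -> E) (a : E) :
  weak_cvg u a -> weak_cvg (fun n => u n - a) 0.
Proof.
move=> ua phi phi_cont; rewrite linear0.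
under eq_fun do rewrite linearB.
by rewrite -(subrr (phi a)); apply: cvgB; [apply: ua | apply: cvg_cst].
Qed.

End functionals.

Section weighted_series.
Context {R : realType} {E : normedModType R}.
Variable psi : nat -> E -> R^o.
Hypothesis psi_linear : forall j, linear (psi j).
Hypothesis psi_le : forall j x, `|psi j x| <= `|x|.

Definition weighted_sum (k : nat) (x : E) : R^o :=
  \sum_(j < k) 4 ^- j * psi j x.

Definition weighted_series (x : E) : R^o := lim (weighted_sum k x @[k --> \oo]).

Lemma weighted_sumS k x :
  weighted_sum k.+1 x = weighted_sum k x + 4 ^- k * psi k x.
Proof. by rewrite /weighted_sum big_ord_recr. Qed.

Lemma weighted_sum_linear k : linear (weighted_sum k).
Proof.
move=> a x y; rewrite /weighted_sum scaler_sumr -big_split /=.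
by apply: eq_bigr => j _; rewrite psi_linear mulrDr mulrCA.
Qed.

Lemma weighted_sum_tail k d x : `|weighted_sum (k + d) x - weighted_sum k x|
  <= 4 / 3 * (4 ^- k - 4 ^- (k + d)) * `|x|.
Proof.
elim: d => [|d IH]; first by rewrite addn0 !subrr normr0 mulr0 mul0r.
rewrite addnS weighted_sumS addrAC exprSr invfM.
have w_gt0 : 0 < 4 ^- (k + d) :> R by rewrite invr_gt0 exprn_gt0.
have := ler_wpM2l (ltW w_gt0) (psi_le (k + d) x).
have := ler_normD (weighted_sum (k + d) x - weighted_sum k x)
  (4 ^- (k + d) * psi (k + d) x).
rewrite normrM gtr0_norm //; lra.
Qed.

Lemma weighted_sum_cvg x : cvg (weighted_sum k x @[k --> \oo]).
Proof.
apply: cauchy_cvg; apply: cauchy_exP => e e_gt0.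
have quarter_lt1 : `|4^-1 : R| < 1 by rewrite ger0_norm ?invf_lt1 //; lra.
have /cvgr0_norm_lt /(_ _ e_gt0) [N _ HN] :=
  cvg_geometric (4 / 3 * `|x|) quarter_lt1.
exists (weighted_sum N x), N => // n /= Nn.
rewrite -ball_normE /ball_ /= distrC -(subnKC Nn).
apply: (le_lt_trans (weighted_sum_tail _ _ _)).
have := HN N (leqnn N); rewrite /geometric /= exprVn ger0_norm; last first.
  by rewrite mulr_ge0 ?invr_ge0 ?exprn_ge0 // mulr_ge0.
have : 0 < 4 ^- (N + (n - N)) :> R by rewrite invr_gt0 exprn_gt0.
have := normr_ge0 x; nra.
Qed.

Lemma weighted_series_tail k x :
  `|weighted_series x - weighted_sum k x| <= 4 / 3 * 4 ^- k * `|x|.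
Proof.
have tail_cvg : `|weighted_sum n x - weighted_sum k x| @[n --> \oo] -->
    `|weighted_series x - weighted_sum k x|.
  by apply: cvg_norm; apply: cvgB; [apply: weighted_sum_cvg | apply: cvg_cst].
rewrite -(cvg_lim _ tail_cvg) //; apply: limr_le; first exact: cvgP tail_cvg.
near=> n; rewrite -(subnKC (_ : (k <= n)%N)); last by near: n; exists k.
apply: (le_trans (weighted_sum_tail _ _ _)); rewrite ler_wpM2r // ler_wpM2l //.
by rewrite gerBl invr_ge0 exprn_ge0.
Unshelve. all: by end_near. Qed.

Lemma weighted_series_linear : linear weighted_series.
Proof.
move=> a x y; apply: cvg_lim => //.
under eq_fun do rewrite weighted_sum_linear.
apply: cvgD; last exact: weighted_sum_cvg.
by apply: cvgZ; [apply: cvg_cst | apply: weighted_sum_cvg].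
Qed.

Lemma weighted_series_le x : `|weighted_series x| <= 4 / 3 * `|x|.
Proof.
have := weighted_series_tail 0 x.
by rewrite /weighted_sum big_ord0 subr0 expr0 invr1 mulr1.
Qed.

Lemma weighted_series_hump k v : psi k v = `|v| ->
  `|weighted_sum k v| <= 1 -> 3 * 4 ^+ k <= `|v| -> 1 <= weighted_series v.
Proof.
move=> psi_v /ler_normlP[sum_lb _] v_big.
have w_gt0 : 0 < 4 ^- k :> R by rewrite invr_gt0 exprn_gt0.
have := ler_wpM2l (ltW w_gt0) v_big.
rewrite mulrCA mulVf ?mulr1 ?expf_neq0 // => wv_big.
have /ler_normlP[] := weighted_series_tail k.+1 v.
rewrite weighted_sumS psi_v exprSr invfM; lra.
Qed.

End weighted_series.

Section gliding_hump.
Context {R : realType} {E : normedModType R}.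
Variable A : nat -> set E.
Hypothesis A_unbounded : forall n (M : R), exists v, A n v /\ M <= `|v|.
Hypothesis A_weakly_null : forall (m : nat -> nat) (v : nat -> E),
  injective m -> (forall k, A (m k) (v k)) -> weak_cvg v 0.

Lemma hump_step (S : E -> R^o) (C M : R) (m : nat) :
  linear S -> (forall x, `|S x| <= C * `|x|) ->
  exists n v, [/\ (m < n)%N, A n v, M <= `|v| & `|S v| <= 1].
Proof.
move=> S_lin S_le.
have [phi phiE phi_cont] := continuous_linear_of_bounded _ _ S_lin S_le.
have [h hP] := choice (fun n => A_unbounded n M).
have := A_weakly_null id h (@inj_id nat) (fun n => (hP n).1) phi phi_cont.
rewrite linear0 => /cvgr0_norm_lt /(_ _ ltr01) [N _ HN].
pose n := maxn N m.+1.
exists n, (h n); split; [by rewrite leq_max leqnn orbT | exact: (hP n).1 |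
  exact: (hP n).2 | ].
by rewrite -phiE ltW // HN //= leq_max leqnn.
Qed.

Lemma gliding_hump : False.
Proof.
have [norming normingP] := choice (@hahn_banach_norming R E).
pose bounded (S : E -> R^o) :=
  linear S /\ exists C, forall x, `|S x| <= C * `|x|.
have bounded0 : bounded (fun _ => 0).
  split; first by move=> a x y; rewrite scaler0 addr0.
  by exists 0 => x; rewrite normr0 mul0r.
(* The state [(n, S)] records the index of the last set drawn from and the
   partial sum [S] of the weighted norming functionals. *)
pose next k (s s' : nat * (E -> R^o)) := (s.1 < s'.1)%N /\ exists v,
  [/\ A s'.1 v, 3 * 4 ^+ k <= `|v|, `|s.2 v| <= 1 &
      s'.2 = fun x => s.2 x + 4 ^- k * norming v x].
have step k (s : nat * (E -> R^o)) : bounded s.2 ->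
    exists2 s', bounded s'.2 & next k s s'.
  case: s => n S /= [S_lin [C S_le]].
  have [n' [v [nn' Av v_big Sv]]] := hump_step _ _ (3 * 4 ^+ k) n S_lin S_le.
  have [norming_lin norming_le _] := normingP v.
  exists (n', fun x => S x + 4 ^- k * norming v x); last first.
    by split => //; exists v.
  split.
    move=> a x y /=.
    by rewrite S_lin norming_lin scalerDr mulrDr scalerAr addrACA.
  exists (C + 4 ^- k) => x /=; rewrite mulrDl.
  apply: (le_trans (ler_normD _ _)); apply: lerD => //.
  rewrite normrM gtr0_norm ?invr_gt0 ?exprn_gt0 //.
  by rewrite ler_wpM2l ?invr_ge0 ?exprn_ge0.
have [f [f0 fP]] :=
  dependent_choice_inv (fun s : nat * (E -> R^o) => bounded s.2) next
    (0%N, fun _ => 0) bounded0 step.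
have [v vP] := choice (fun k => (fP k).2.2).
pose psi j := norming (v j).
have f_sum k : (f k).2 = weighted_sum psi k.
  elim: k => [|k IH].
    by rewrite f0; apply/funext => x; rewrite /weighted_sum big_ord0.
  by have [_ _ _ ->] := vP k; apply/funext => x; rewrite weighted_sumS IH.
pose m k := (f k.+1).1.
have m_inj : injective m.
  have m_lt : {homo m : i j / (i < j)%N}.
    by apply: homo_ltn => [j i l|i]; [apply: ltn_trans | apply: (fP i.+1).2.1].
  by move=> i j mij; have [/m_lt|/m_lt|//] := ltngtP i j; rewrite mij ltnn.
have Am k : A (m k) (v k) by have [] := vP k.
have psi_lin j : linear (psi j).
  by have [lin _ _] := normingP (v j); exact: lin.
have psi_le j x : `|psi j x| <= `|x|.
  by have [_ le _] := normingP (v j); exact: le.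
have hump k : 1 <= weighted_series psi (v k).
  have [_ v_big Sv _] := vP k; have [_ _ psi_v] := normingP (v k).
  have sum_v : `|weighted_sum psi k (v k)| <= 1 by rewrite -f_sum.
  exact: weighted_series_hump _ psi_le k (v k) psi_v sum_v v_big.
have [phi phiE phi_cont] := continuous_linear_of_bounded _ _
  (weighted_series_linear _ psi_lin psi_le) (weighted_series_le _ psi_le).
have := A_weakly_null m v m_inj Am phi phi_cont.
rewrite linear0 => /cvgr0_norm_lt /(_ _ ltr01) [N _ HN].
have := HN N (leqnn N); rewrite phiE ltNge.
by rewrite (le_trans (hump N) (ler_norm _)).
Qed.

End gliding_hump.

Section disjoint_neighbourhoods.
Context {R : realType} {X : topologicalType}.
Hypothesis points_separated : forall a b : X, a <> b ->
  exists f : X -> R, [/\ continuous f, f a = 0 & f b = 1].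

Definition splits_off (S W W' : set X) : Prop := W' `<=` W /\
  exists t U, [/\ S t, U t, open U, U `<=` W & U `&` W' = set0].

Lemma split_infinite_open (S W : set X) : open W -> infinite_set (S `&` W) ->
  exists2 W', open W' /\ infinite_set (S `&` W') & splits_off S W W'.
Proof.
move=> W_open SW_inf.
have [a [Sa Wa]] := infinite_setN0 SW_inf.
have [b [[Sb Wb] ba]] := infinite_setN0 (infinite_setD SW_inf (finite_set1 a)).
have [f [f_cont fa fb]] := points_separated a b (fun ab => ba (esym ab)).
have cut (g : X -> R) t : continuous g -> S t -> W t -> g t < 1 / 3 ->
    infinite_set (S `&` (W `&` [set y | 1 / 3 < g y])) ->
    exists2 W', open W' /\ infinite_set (S `&` W') & splits_off S W W'.
  move=> g_cont St Wt gt SWg_inf.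
  have W_cut_open (P : set R) : open P -> open (W `&` g @^-1` P).
    by move=> P_open; apply: openI => //; apply: (proj1 (continuousP g) g_cont).
  exists (W `&` g @^-1` [set r | 1 / 3 < r]).
    by split => //; apply: W_cut_open; apply: open_gt.
  split => //; exists t, (W `&` g @^-1` [set r | r < 1 / 3]); split => //.
  - by apply: W_cut_open; apply: open_lt.
  - by rewrite -subset0 => y [[_ /= lt] [_ /= gt']]; lra.
have [inf_hi|fin_hi] :=
  pselect (infinite_set (S `&` (W `&` [set y | 1 / 3 < f y]))).
  by apply: (cut f a) => //; rewrite fa; lra.
apply: (cut (fun y => 1 - f y) b) => //.
- by move=> y; apply: cvgB; [apply: cvg_cst | apply: f_cont].
- by rewrite fb; lra.
apply: sub_infinite_set (infinite_setD SW_inf (contrapT fin_hi)).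
move=> y [[Sy Wy] not_hi]; split => //; split => //=.
have /negP : ~ (1 / 3 < f y) by move=> fy; apply: not_hi.
rewrite -leNgt; lra.
Qed.

Lemma infinite_disjoint_nbhs (S : set X) : infinite_set S ->
  exists (t : nat -> X) (U : nat -> set X), [/\ forall n, S (t n) /\ U n (t n),
    forall n, open (U n) & forall n m x, U n x -> U m x -> n = m].
Proof.
move=> S_inf.
have init : open [set: X] /\ infinite_set (S `&` setT).
  by rewrite setIT; split => //; apply: openT.
have [W [_ WP]] := dependent_choice_inv
  (fun W => open W /\ infinite_set (S `&` W)) (fun=> splits_off S) setT init
  (fun _ W W_inf => split_infinite_open _ _ W_inf.1 W_inf.2).
have [t tP] := choice (fun n => (WP n).2.2).
have [U UP] := choice tP.
have W_decr : {homo W : i j / (i <= j)%N >-> j `<=` i}.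
  apply: (@homo_leq _ W (fun A B => B `<=` A)) => [A|B A C AB BC|n].
  - exact: subset_refl.
  - exact: subset_trans BC AB.
  - by case: (WP n) => _ [].
exists t, U; split.
- by move=> n; have [] := UP n.
- by move=> n; have [] := UP n.
have disj n m x : (n < m)%N -> U n x -> U m x -> False.
  move=> nm Unx Umx; have [_ _ _ _ UW0] := UP n; have [_ _ _ UW _] := UP m.
  have Wx : W n.+1 x by apply: (W_decr n.+1 m nm); apply: UW.
  by have : (U n `&` W n.+1) x by []; rewrite UW0.
move=> n m x Unx Umx; have [nm|mn|//] := ltngtP n m.
- by case: (disj n m x nm Unx Umx).
- by case: (disj m n x mn Umx Unx).
Qed.

End disjoint_neighbourhoods.

Lemma tychonoff_separating {R : realType} {X : topologicalType} :
  tychonoff_space X R -> forall a b : X, a <> b ->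
  exists f : X -> R, [/\ continuous f, f a = 0 & f b = 1].
Proof.
case=> X_T1 X_creg a b ab.
have [f [f_cont [fa fb]]] :=
  X_creg a [set b] (@accessible_closed_set1 _ X_T1 b) ab.
by exists f; split => //; apply: fb.
Qed.

Lemma disjoint_supports_cp_cvg0 {R : realType} {X : topologicalType}
    (g : nat -> X -> R) :
  (forall i j x, g i x != 0 -> g j x != 0 -> i = j) -> cp_cvg g (fun _ => 0).
Proof.
move=> g_disj x; apply: cvg_near_cst.
have [k0 k0P] : exists k0, forall k, (k0 < k)%N -> g k x = 0.
  have [[k0 gk0]|g0] := pselect (exists k, g k x != 0).
  - exists k0 => k; apply: contraTeq => gk.
    by rewrite (g_disj _ _ _ gk gk0) ltnn.
  - by exists 0%N => k _; apply: contra_notP g0 => gk; exists k; apply/eqP.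
by exists k0.+1 => // k /= k0k; apply: k0P.
Qed.

Theorem lemma3p3 (R : realType) (X : topologicalType)
  (E : completeNormedModType R) (T : (X -> R) -> E) :
  tychonoff_space X R -> infinite_set [set: X] ->
  seq_cont_Cp_Ew T ->
  finite_set (~` BT T).
Proof.
move=> X_tych _ T_cont; apply: contrapT => notB_inf.
have [t [U [tP U_open U_disj]]] :=
  infinite_disjoint_nbhs (tychonoff_separating X_tych) _ notB_inf.
pose A n v := exists g : X -> R,
  [/\ continuous g, supp g `<=` U n & v = T g - T (fun=> 0)].
apply: (gliding_hump A).
- move=> n M; apply: contrapT => A_bounded; have [tB Ut] := tP n; apply: tB.
  exists (U n); split => //; exists (M + `|T (fun=> 0)|) => g g_cont g_supp.
  rewrite leNgt; apply/negP => g_big; apply: A_bounded.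
  exists (T g - T (fun=> 0)); split; first by exists g.
  have := ler_distD (T (fun=> 0)) (T g) 0; rewrite !subr0; lra.
- move=> m v m_inj Av; have [g gP] := choice Av.
  have -> : v = fun k => T (g k) - T (fun=> 0).
    by apply/funext => k; have [_ _ ->] := gP k.
  apply: weak_subr_cvg0; apply: T_cont; first by move=> k; have [] := gP k.
    exact: cst_continuous.
  apply: disjoint_supports_cp_cvg0 => i j x gi gj; apply: m_inj.
  have [_ gi_supp _] := gP i; have [_ gj_supp _] := gP j.
  exact: U_disj _ _ x (gi_supp _ gi) (gj_supp _ gj).
Qed.
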